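(* For every positive integer $k$ and every integer $A\ge0$, \[\mathcal{R}_{k,(k+1)^2}\big(Ak(k+1)\big)=\mathcal{R}_{k+1,k(k+1)}\big(Ak(k+1)\big)=\tfrac12 kA(A+1)+(A+1).\]
   Context: For $a,b>0$ and $t\ge0$, let $\Delta_{a,b}(t)\subset\mathbb{R}^2$ be the closed right triangle with vertices $(0,0)$, $(t/a,0)$ and $(0,t/b)$, and let $\mathcal{R}_{a,b}(t)=\#\big(\Delta_{a,b}(t)\cap\mathbb{Z}_{\ge0}^2\big)$ be the number of lattice points it contains. *)

From HB Require Import structures.
From mathcomp Require Import all_boot all_order all_algebra finmap.
From mathcomp Require Import boolp classical_sets cardinality reals.
Set Implicit Arguments. Unset Strict Implicit. Unset Printing Implicit Defensive.
Import Order.TTheory GRing.Theory Num.Theory.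
Local Open Scope ring_scope.
Local Open Scope classical_set_scope.

Definition Delta {R : realType} (a b t : R) : set (R * R) :=
  [set p | 0 <= p.1 /\ 0 <= p.2 /\ a * p.1 + b * p.2 <= t].

Definition latpts {R : realType} (a b t : R) : set (nat * nat) :=
  [set p | Delta a b t (p.1%:R, p.2%:R)].

(* R_{a,b}(t) = number of lattice points in Delta_{a,b}(t)
   (the set is finite for a,b>0; fset_set of an infinite set would be empty). *)
Definition Rcount {R : realType} (a b t : R) : nat :=
  #|` fset_set (latpts a b t) |.

From HB Require Import structures.
From mathcomp Require Import all_boot all_order all_algebra finmap.
From mathcomp Require Import boolp classical_sets cardinality reals.
From mathcomp Require Import zify ring.
Import Order.TTheory GRing.Theory Num.Theory.

(** Dividing by k+1, the lattice points of Delta_{k+1,k(k+1)}(Ak(k+1)) are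
    those with x + k y <= k A; row y holds k (A - y) + 1 of them, which sums
    to k A (A + 1)/2 + A + 1.  For Delta_{k,(k+1)^2}, write x = (k+1) q + r
    with r <= k and send (x, y) to ((k+1) y + r, q).  This involution turns
    k x + (k+1)^2 y into (k+1)(x' + k y') - r, and as the bound A k (k+1) is a
    multiple of k+1 the defect r never decides membership, so the involution
    maps the lattice points of one triangle onto those of the other. *)

Definition nat_grid (mx my : nat) : seq (nat * nat) :=
  [seq (x, y) | y <- iota 0 my.+1, x <- iota 0 mx.+1].

Section BoundedSet.
Local Open Scope classical_set_scope.

Variables (P : pred (nat * nat)) (mx my : nat).
Hypothesis P_bounded : forall x y, P (x, y) -> x <= mx /\ y <= my.

Let grid_uniq : uniq (nat_grid mx my).
Proof.
apply: allpairs_uniq; rewrite ?iota_uniq //.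
by move=> [x y] [x' y'] _ _ /= [-> ->].
Qed.

Let bounded_setE : [set p | P p] = [set` [fset p in filter P (nat_grid mx my)]%fset].
Proof.
apply/seteqP; split=> -[x y]; rewrite !mksetE inE mem_filter; last by case/andP.
move=> Pxy; rewrite Pxy; have [le_x le_y] := P_bounded _ _ Pxy.
by apply/allpairsPdep; exists y, x; rewrite !mem_iota.
Qed.

Lemma bounded_set_finite : finite_set [set p | P p].
Proof. by rewrite bounded_setE; apply: finite_fset. Qed.

Lemma card_bounded_set :
  #|` fset_set [set p | P p]| =
  \sum_(0 <= y < my.+1) count (fun x => P (x, y)) (iota 0 mx.+1).
Proof.
rewrite bounded_setE set_fsetK card_fseq /nat_grid undup_id ?filter_uniq //.
rewrite size_filter count_flatten sumnE !big_map /index_iota subn0.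
by apply: eq_bigr => y _; rewrite count_map.
Qed.

End BoundedSet.

Lemma count_leq_iota m n : count (leq^~ m) (iota 0 n) = minn m.+1 n.
Proof.
elim: n => // n IHn; rewrite -addn1 iotaD count_cat IHn /= add0n addn0.
by case: leqP => h; lia.
Qed.

Definition nat_latpts (a b t : nat) : set (nat * nat) :=
  [set p | a * p.1 + b * p.2 <= t]%classic.

Lemma nat_latpts_pmul2l c a b t :
  0 < c -> nat_latpts (c * a) (c * b) (c * t) = nat_latpts a b t.
Proof.
move=> c_gt0; apply/funext => p /=.
by rewrite /nat_latpts !mksetE -!mulnA -mulnDr leq_pmul2l.
Qed.

Lemma nat_latpts1_finite k m : 0 < k -> finite_set (nat_latpts 1 k m).
Proof. by move=> k_gt0; apply: (@bounded_set_finite _ m m) => x y /=; nia. Qed.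

Lemma card_nat_latpts1 k A : 0 < k ->
  #|` fset_set (nat_latpts 1 k (k * A))| = k * 'C(A.+1, 2) + A.+1.
Proof.
move=> k_gt0; rewrite (@card_bounded_set _ (k * A) A) => [|x y /=]; last by nia.
have row y : y < A.+1 ->
    count (fun x => 1 * x + k * y <= k * A) (iota 0 (k * A).+1) = (k * (A - y)).+1.
  move=> lt_yA; rewrite (eq_count (a2 := leq^~ (k * (A - y)))) => [|x].
    by rewrite count_leq_iota; apply/minn_idPl; rewrite ltnS leq_mul2l leq_subr orbT.
  by rewrite /= mul1n mulnBr leq_subRL 1?addnC // leq_pmul2l // -ltnS.
rewrite (eq_big_nat _ _ (F2 := fun y => (k * (A - y)).+1)) => [|y /andP[_]]; last exact: row.
rewrite big_nat_rev /= (eq_big_nat _ _ (F2 := fun y => k * y + 1)) => [|y /andP[_ lt_yA]].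
  by rewrite big_split /= -big_distrr /= bin2_sum sum_nat_const_nat muln1 subn0.
by rewrite add0n subSS subKn // addn1.
Qed.

Definition digit_swap (k : nat) (p : nat * nat) : nat * nat :=
  (k.+1 * p.2 + p.1 %% k.+1, p.1 %/ k.+1).

Lemma digit_swapK k : involutive (digit_swap k).
Proof.
case=> x y; have lt_r : x %% k.+1 < k.+1 by rewrite ltn_mod.
rewrite /digit_swap /= [k.+1 * y]mulnC divnMDl // (divn_small lt_r) addn0.
by rewrite modnMDl (modn_small lt_r) mulnC -divn_eq.
Qed.

Lemma digit_swap_weight k p :
  k.+1 * ((digit_swap k p).1 + k * (digit_swap k p).2)
  = k * p.1 + k.+1 ^ 2 * p.2 + p.1 %% k.+1.
Proof.
have e := divn_eq p.1 k.+1; rewrite /=.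
by set q := p.1 %/ k.+1; set r := p.1 %% k.+1; rewrite [in k * p.1]e; ring.
Qed.

Lemma digit_swap_leq k m p :
  (k * p.1 + k.+1 ^ 2 * p.2 <= k.+1 * m)
  = ((digit_swap k p).1 + k * (digit_swap k p).2 <= m).
Proof.
have lt_r : p.1 %% k.+1 < k.+1 by rewrite ltn_mod.
have := digit_swap_weight k p; set w := _ + k * _ => e.
apply/idP/idP => le_m.
  by rewrite -ltnS -(ltn_pmul2l (ltn0Sn k)) e mulnS; lia.
by rewrite -(leq_pmul2l (ltn0Sn k)) e in le_m; lia.
Qed.

Lemma card_nat_latpts_swap k m : 0 < k ->
  #|` fset_set (nat_latpts k (k.+1 ^ 2) (k.+1 * m))| = #|` fset_set (nat_latpts 1 k m)|.
Proof.
move=> k_gt0.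
have -> : nat_latpts k (k.+1 ^ 2) (k.+1 * m) = (digit_swap k @` nat_latpts 1 k m)%classic.
  apply/seteqP; split=> [p le_m | _ [p tri_p <-]].
    exists (digit_swap k p); rewrite ?digit_swapK //.
    by rewrite /nat_latpts mksetE mul1n -digit_swap_leq.
  by rewrite /nat_latpts mksetE digit_swap_leq digit_swapK -[p.1]mul1n.
rewrite fset_set_image; last exact: nat_latpts1_finite.
by apply/eqP/card_in_imfsetP => p q _ _; apply: (can_inj (digit_swapK k)).
Qed.

Local Open Scope ring_scope.

Lemma latpts_nat (R : realType) (a b t : nat) :
  latpts (a%:R : R) b%:R t%:R = nat_latpts a b t.
Proof.
apply/seteqP; split=> p /=; rewrite /latpts /Delta /= -!natrM -natrD ler_nat.
  by case=> _ [].
by move=> le_t; rewrite !ler0n.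
Qed.

Theorem mainTheorem15 (R : realType) (k A : nat) (hk : (0 < k)%N) :
  let t : R := (A * k * (k + 1))%:R in
  (Rcount (k%:R : R) ((k + 1) ^ 2)%:R t)%:R = (Rcount ((k + 1)%:R : R) (k * (k + 1))%:R t)%:R :> R /\
  (Rcount ((k + 1)%:R : R) (k * (k + 1))%:R t)%:R
    = 2^-1 * k%:R * A%:R * (A%:R + 1) + (A%:R + 1) :> R.
Proof.
move=> t; rewrite /t /Rcount !latpts_nat !addn1.
have -> : nat_latpts k.+1 (k * k.+1) (A * k * k.+1) = nat_latpts 1 k (k * A).
  by rewrite -(@nat_latpts_pmul2l k.+1 1 k (k * A)) //; congr nat_latpts; ring.
have -> : (A * k * k.+1 = k.+1 * (k * A))%N by ring.
rewrite card_nat_latpts_swap // card_nat_latpts1 //; split=> //.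
have bin2_double : (2 * 'C(A.+1, 2) = A * A.+1)%N.
  by rewrite (mul_bin_left A.+1 1) bin1 subn1.
rewrite natrD natrM.
have -> : 'C(A.+1, 2)%:R = 2^-1 * (A * A.+1)%:R :> R.
  by rewrite -bin2_double natrM mulKf ?pnatr_eq0.
by rewrite natrM -natr1; field.
Qed.
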